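(* Let $H$ be a hexagonal system with a perfect matching. Suppose $\mathcal{D}=\{D_1,\ldots,D_k\}$ is a set of elementary edge cuts of $H$ such that every nice cycle of $H$ has at least one edge in common with some $D_i\in\mathcal{D}$. Then $D=\bigcup_{i=1}^{k}D_i$ is a complete forcing set of $H$.
   Context: A hexagonal system (HS) is a finite 2-connected plane graph in which every interior face is a regular hexagon of the hexagonal lattice; its vertices are properly colored black and white. A cycle $C$ of a graph $G$ with a perfect matching is nice if $G-V(C)$ has a perfect matching. For a partition $\{V_1,V_2\}$ of $V(H)$, the set $D$ of edges with one end in $V_1$ and the other in $V_2$ is an edge cut; $D$ is an elementary edge cut (e-cut) if $H-D$ has exactly two components and every edge of $D$ joins a black vertex of one of these components to a white vertex of the other. For a perfect matching $M$ of $G$, a forcing set of $M$ is a subset of $M$ contained in no other perfect matching of $G$. A complete forcing set of $G$ is a set $S\subseteq E(G)$ such that for every perfect matching $M$ of $G$, $S\cap M$ is a forcing set of $M$. *)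

From HB Require Import structures.
From mathcomp Require Import all_boot.
Set Implicit Arguments. Unset Strict Implicit. Unset Printing Implicit Defensive.

(* The hexagonal (honeycomb) lattice in "brick-wall" coordinates, restricted
   to the box [0,N) x [0,N):  vertices (x,y); horizontal edges (x,y)-(x+1,y);
   vertical edges (x,y)-(x,y+1) exactly when x+y is even.  A vertex is black
   iff x+y is even (proper 2-colouring). The hexagons (faces) of the lattice
   are the 3x2 "bricks" with lower-left corner (a,y), a+y even. *)
Section HexLattice.
Variable N : nat.

Definition vtx := ('I_N * 'I_N)%type.
Definition xc (v : vtx) : nat := v.1.
Definition yc (v : vtx) : nat := v.2.
Definition black (v : vtx) : bool := ~~ odd (xc v + yc v).

Definition lat_adj (u v : vtx) : bool :=
  ((yc u == yc v) && (((xc u).+1 == xc v) || ((xc v).+1 == xc u)))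
  || ((xc u == xc v) &&
      ((((yc u).+1 == yc v) && black u) || (((yc v).+1 == yc u) && black v))).

Definition lat_edge (e : {set vtx}) : bool :=
  [exists u, exists v, (e == [set u; v]) && lat_adj u v].

Definition is_hex (h : vtx) : bool :=
  black h && (xc h + 2 < N) && (yc h + 1 < N).
Definition hexv (h v : vtx) : bool :=
  (yc h <= yc v <= yc h + 1) && (xc h <= xc v <= xc h + 2).
Definition hex_edge (h : vtx) (e : {set vtx}) : bool :=
  lat_edge e && (e \subset [set v | hexv h v]).

Definition lat_cycle (c : seq vtx) : bool :=
  uniq c && (2 < size c) && cycle lat_adj c.
Definition cycle_edges (c : seq vtx) : {set {set vtx}} :=
  [set [set x; next c x] | x in c].

(* Vertical edge e is crossed by the horizontal ray going right from the
   centre of the hexagon with corner h. *)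
Definition crosses (h : vtx) (e : {set vtx}) : bool :=
  [exists v in e, exists w in e,
    (xc v == xc w) && (yc v == yc h) && (yc w == (yc h).+1) && (xc h + 2 <= xc v)].
(* Hexagon h lies in the interior of the cycle c (ray-parity rule). *)
Definition inside (c : seq vtx) (h : vtx) : bool :=
  is_hex h && odd #|[set e in cycle_edges c | crosses h e]|.

(* The hexagonal system bounded by the lattice cycle c: all vertices and edges
   of the lattice hexagons in the interior of c. *)
Definition HS_V (c : seq vtx) : {set vtx} :=
  [set v | [exists h, inside c h && hexv h v]].
Definition HS_E (c : seq vtx) : {set {set vtx}} :=
  [set e | [exists h, inside c h && hex_edge h e]].

(* Generic notions for a graph with vertex set W and edge set E
   (edges are 2-element vertex sets). *)
Definition perfect_matching (W : {set vtx}) (E M : {set {set vtx}}) : bool :=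
  (M \subset E) && [forall e in M, e \subset W]
  && [forall v in W, #|[set e in M | v \in e]| == 1].

Definition graph_cycle (E : {set {set vtx}}) (c : seq vtx) : bool :=
  uniq c && (2 < size c) && all (fun x => [set x; next c x] \in E) c.

Definition nice_cycle (W : {set vtx}) (E : {set {set vtx}}) (c : seq vtx) : Prop :=
  graph_cycle E c /\
  exists M, perfect_matching (W :\: [set x in c]) [set e in E | e \subset W :\: [set x in c]] M.

Definition gconn (E : {set {set vtx}}) : rel vtx :=
  connect (fun x y => [set x; y] \in E).

Definition two_components (W : {set vtx}) (E : {set {set vtx}}) : Prop :=
  exists a b, [/\ a \in W, b \in W, ~~ gconn E a b &
                forall v, v \in W -> gconn E a v || gconn E b v].

Definition cut_edges (E : {set {set vtx}}) (V1 V2 : {set vtx}) : {set {set vtx}} :=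
  [set e in E | [exists u in V1, exists v in V2, e == [set u; v]]].

Definition ecut (W : {set vtx}) (E : {set {set vtx}}) (D : {set {set vtx}}) : Prop :=
  exists V1 V2 : {set vtx},
    [/\ V1 :&: V2 = set0, V1 :|: V2 = W, V1 != set0 & V2 != set0] /\
    D = cut_edges E V1 V2 /\
    two_components W (E :\: D) /\
    ((forall e, e \in D -> forall v, v \in e -> (v \in V1) = black v) \/
     (forall e, e \in D -> forall v, v \in e -> (v \in V2) = black v)).

Definition complete_forcing (W : {set vtx}) (E S : {set {set vtx}}) : Prop :=
  forall M M', perfect_matching W E M -> perfect_matching W E M' ->
    S :&: M \subset M' -> M' = M.

End HexLattice.

From mathcomp Require Import all_boot.
Set Implicit Arguments. Unset Strict Implicit. Unset Printing Implicit Defensive.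

(* Edges of H join vertices of opposite
   colours, so each matching is encoded by its partner function, and M is
   determined by the partners of the black vertices.  If M' ≠ M, pick a
   black v0 whose partners differ and follow the alternating walk
   "black v ↦ its M-partner, white v ↦ its M'-partner".  This is a
   permutation of the vertices; the orbit C of v0 is a cycle of H of length
   > 2 alternating between M- and M'-edges, and C is nice because M restricted
   to H - V(C) is a perfect matching.  By hypothesis some e-cut D, with sides
   A and B, contains an edge of C; orient it so that every edge of D has its
   A-end black.  The cyclic orbit meets both sides, so it leaves A along some
   edge {y, next y}; that edge lies in D, hence y is black and the edge is the
   M-edge at y.  It then lies in D ∩ M ⊆ M', so the M- and M'-partners of y
   agree, contradicting the alternation along C. *)

Lemma fconnect_exit (T : finType) (f : T -> T) (A : pred T) x y :
  fconnect f x y -> x \in A -> y \notin A ->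
  exists2 z, fconnect f x z & (z \in A) && (f z \notin A).
Proof.
move=> /iter_findex <-; elim: (findex f x y) => [|n IH] xA; first by rewrite xA.
rewrite iterS => fnA; case: (boolP (iter n f x \in A)) => [inA|notA].
  by exists (iter n f x); rewrite ?fconnect_iter ?inA.
exact: IH.
Qed.

Lemma fconnect_period2 (T : finType) (f : T -> T) x y :
  f (f x) = x -> fconnect f x y -> (y == x) || (y == f x).
Proof.
move=> ffx /iter_findex <-; elim: (findex f x y) => [|n IH]; first by rewrite eqxx.
by rewrite iterS; case/orP: IH => /eqP ->; rewrite ?ffx eqxx ?orbT.
Qed.

Section ProperColouring.
Variable N : nat.
Implicit Types (u v x y a b : vtx N) (E : {set {set vtx N}}).

Definition proper_edges E : Prop :=
  forall e, e \in E -> exists a b, e = [set a; b] /\ black a != black b.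

(* Adjacent lattice vertices have coordinate sums differing by one. *)
Lemma lat_adj_black u v : lat_adj u v -> black u != black v.
Proof.
have step (p q : nat) : p.+1 = q -> ~~ odd p != ~~ odd q.
  by move=> <- /=; case: (odd p).
rewrite /lat_adj /black /xc /yc.
case/orP=> /andP[/eqP Heq] => [/orP|/orP[]/andP[]];
  [case=> /eqP Hs | move=> /eqP Hs _ | move=> /eqP Hs _];
  [|rewrite eq_sym|idtac|rewrite eq_sym]; apply: step; rewrite -Hs Heq ?addSn ?addnS //.
Qed.

Lemma lat_edges_proper E : (forall e, e \in E -> lat_edge e) -> proper_edges E.
Proof.
move=> HE e /HE /existsP[a /existsP[b /andP[/eqP -> Hab]]].
by exists a, b; split; last exact: lat_adj_black.
Qed.

Lemma proper_edge_colour E x y :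
  proper_edges E -> [set x; y] \in E -> black y = ~~ black x.
Proof.
move=> HE /HE[a [b [Exy Hab]]].
have ha : a \in [set x; y] by rewrite Exy set21.
have hb : b \in [set x; y] by rewrite Exy set22.
have hx : x \in [set a; b] by rewrite -Exy set21.
have hy : y \in [set a; b] by rewrite -Exy set22.
move: Hab; case/set2P: hx hy => Hx /set2P[] Hy; subst x y; rewrite ?eqxx //;
  try by case: (black a) (black b) => [] [].
- by move: hb; rewrite !inE orbb => /eqP ->; rewrite eqxx.
- by move: ha; rewrite !inE orbb => /eqP ->; rewrite eqxx.
Qed.

Lemma proper_edge_black E e :
  proper_edges E -> e \in E -> exists2 v, v \in e & black v.
Proof.
move=> HE /HE[a [b [-> Hab]]].
case: (boolP (black a)) => ba; first by exists a; rewrite ?set21.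
by exists b; rewrite ?set22 //; move: Hab; rewrite (negbTE ba); case: (black b).
Qed.

End ProperColouring.

Section Cuts.
Variable N : nat.
Implicit Types (W A B : {set vtx N}) (E D : {set {set vtx N}}).

Lemma cut_edgesC E A B : cut_edges E A B = cut_edges E B A.
Proof.
apply/setP => e; rewrite !inE; case: (e \in E) => //=.
by apply/exists_inP/exists_inP => -[u uA /exists_inP[w wB /eqP->]];
  exists w => //; apply/exists_inP; exists u; rewrite // setUC.
Qed.

Lemma ecut_oriented W E D : ecut W E D -> exists A B,
  [/\ A :&: B = set0, A :|: B = W, D = cut_edges E A B &
      forall e, e \in D -> forall v, v \in e -> (v \in A) = black v].
Proof.
case=> V1 [V2 [[V12 V12W _ _] [HD [_ [orient|orient]]]]]; first by exists V1, V2.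
by exists V2, V1; split; rewrite 1?setIC 1?setUC -1?cut_edgesC.
Qed.

End Cuts.

Section Matchings.
Variable N : nat.
Implicit Types (u v x y : vtx N) (e : {set vtx N}).
Variables (W : {set vtx N}) (E : {set {set vtx N}}).
Hypothesis HE : proper_edges E.

Section Partner.
Variable M : {set {set vtx N}}.
Hypothesis HM : perfect_matching W E M.

(* The vertex matched to v by M (v itself when v is not covered). *)
Definition partner v := odflt v [pick u | [set v; u] \in M].

Lemma matching_edge e : e \in M -> e \in E.
Proof. by case/andP: HM => /andP[/subsetP sME _] _; apply: sME. Qed.

Lemma matching_sub e : e \in M -> e \subset W.
Proof. by case/andP: HM => /andP[_ /forall_inP sMW] _; apply: sMW. Qed.

Lemma matching_card v : v \in W -> #|[set e in M | v \in e]| == 1.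
Proof. by case/andP: HM => _ /forall_inP; apply. Qed.

Lemma partner_edge v : v \in W -> [set v; partner v] \in M.
Proof.
move=> vW; rewrite /partner; case: pickP => [//|noM].
case/cards1P: (matching_card vW) => e He.
have : e \in [set e in M | v \in e] by rewrite He set11.
rewrite inE => /andP[eM ve].
have [a [b [Eab _]]] := HE (matching_edge eM).
move: ve; rewrite Eab => /set2P[] Hv; rewrite -Hv in Eab.
  by move: (noM b); rewrite -Eab eM.
by move: (noM a); rewrite setUC -Eab eM.
Qed.

Lemma partner_uniq e v : e \in M -> v \in e -> e = [set v; partner v].
Proof.
move=> eM ve; have vW : v \in W by apply: (subsetP (matching_sub eM)).
case/cards1P: (matching_card vW) => f Hf.
have h1 : e \in [set e in M | v \in e] by rewrite inE eM.
have h2 : [set v; partner v] \in [set e in M | v \in e].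
  by rewrite inE partner_edge // set21.
by move: h1 h2; rewrite Hf !inE => /eqP -> /eqP ->.
Qed.

Lemma partner_out v : v \notin W -> partner v = v.
Proof.
move=> vW; rewrite /partner; case: pickP => [u uM|//].
by move: vW; rewrite (subsetP (matching_sub uM)) // set21.
Qed.

Lemma partner_in v : v \in W -> partner v \in W.
Proof. by move=> vW; apply: (subsetP (matching_sub (partner_edge vW))); rewrite set22. Qed.

Lemma partner_colour v : v \in W -> black (partner v) = ~~ black v.
Proof. by move=> vW; apply: proper_edge_colour HE (matching_edge (partner_edge vW)). Qed.

Lemma partnerK : involutive partner.
Proof.
move=> v; case: (boolP (v \in W)) => vW; last by rewrite !partner_out.
have : partner (partner v) \in [set v; partner v].
  by rewrite {1}(partner_uniq (partner_edge vW) (set22 v _)) set22.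
case/set2P=> // Hv; have := partner_colour (partner_in vW).
by rewrite Hv; case: (black _).
Qed.

End Partner.

Lemma matching_subset M1 M2 :
  perfect_matching W E M1 -> perfect_matching W E M2 ->
  (forall v, v \in W -> black v -> partner M1 v = partner M2 v) -> M1 \subset M2.
Proof.
move=> HM1 HM2 same; apply/subsetP => e eM1.
have [v ve bv] := proper_edge_black HE (matching_edge HM1 eM1).
have vW : v \in W by apply: (subsetP (matching_sub HM1 eM1)).
by rewrite (partner_uniq HM1 eM1 ve) same //; apply: partner_edge.
Qed.

Section Alternating.
Variables M M' : {set {set vtx N}}.
Hypotheses (HM : perfect_matching W E M) (HM' : perfect_matching W E M').

Local Notation m := (partner M).
Local Notation m' := (partner M').

Lemma matchings_differ :
  M' != M -> exists v0, [/\ v0 \in W, black v0 & m v0 != m' v0].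
Proof.
move=> neqM.
case: (boolP [exists v, [&& v \in W, black v & m v != m' v]]).
  by case/existsP=> v /and3P[]; exists v.
rewrite negb_exists => /forallP same; case/eqP: neqM.
have agree v : v \in W -> black v -> m v = m' v.
  by move=> vW bv; apply/eqP; move: (same v); rewrite vW bv negbK.
by apply/eqP; rewrite eqEsubset !matching_subset // => v vW bv; rewrite agree.
Qed.

Definition alt v := if black v then m v else m' v.
Definition alt_inv v := if black v then m' v else m v.

Lemma altK : cancel alt alt_inv.
Proof.
move=> v; case: (boolP (v \in W)) => vW; case: (boolP (black v)) => bv.
- by rewrite /alt bv /alt_inv (partner_colour HM) // bv /= partnerK.
- by rewrite /alt (negbTE bv) /alt_inv (partner_colour HM') // (negbTE bv) /= partnerK.
- by rewrite /alt bv /alt_inv (partner_out HM) // bv partner_out.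
- by rewrite /alt (negbTE bv) /alt_inv (partner_out HM') // (negbTE bv) partner_out.
Qed.

Lemma alt_invK : cancel alt_inv alt.
Proof.
move=> v; case: (boolP (v \in W)) => vW; case: (boolP (black v)) => bv.
- by rewrite /alt_inv bv /alt (partner_colour HM') // bv /= partnerK.
- by rewrite /alt_inv (negbTE bv) /alt (partner_colour HM) // (negbTE bv) /= partnerK.
- by rewrite /alt_inv bv /alt (partner_out HM') // bv partner_out.
- by rewrite /alt_inv (negbTE bv) /alt (partner_out HM) // (negbTE bv) partner_out.
Qed.

Lemma alt_inj : injective alt. Proof. exact: can_inj altK. Qed.

Lemma alt_in v : v \in W -> alt v \in W.
Proof. by move=> vW; rewrite /alt; case: ifP => _; apply: partner_in. Qed.

Lemma alt_edge v : v \in W -> [set v; alt v] \in E.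
Proof.
by move=> vW; rewrite /alt; case: ifP => _;
  [apply: (matching_edge HM) | apply: (matching_edge HM')]; apply: partner_edge.
Qed.

Lemma alt_colour v : v \in W -> black (alt v) = ~~ black v.
Proof. by move=> vW; rewrite /alt; case: ifP => bv; rewrite partner_colour ?bv. Qed.

Lemma alt_period2 v :
  v \in W -> black v -> (alt (alt v) == v) = (m v == m' v).
Proof.
move=> vW bv; rewrite {2}/alt bv /alt partner_colour // bv /=.
apply/eqP/eqP => [twice|->]; last exact: partnerK.
by rewrite -{2}twice partnerK.
Qed.

Section AlternatingCycle.
Variable v0 : vtx N.
Hypotheses (v0W : v0 \in W) (bv0 : black v0) (mv0 : m v0 != m' v0).

Local Notation C := (orbit alt v0).

Lemma alt_cycle_in z : z \in C -> z \in W.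
Proof. by rewrite -fconnect_orbit => /iter_findex <-; elim: findex => //= n; apply: alt_in. Qed.

Lemma alt_cycle_fconnect y z : y \in C -> z \in C -> fconnect alt y z.
Proof.
rewrite -!fconnect_orbit => v0y v0z.
by apply: connect_trans v0z; rewrite (fconnect_sym alt_inj).
Qed.

Lemma alt_cycle_alt z : z \in C -> alt z \in C.
Proof. exact: mem_orbit. Qed.

Lemma alt_cycle_alt_inv z : z \in C -> alt_inv z \in C.
Proof.
rewrite -!fconnect_orbit => v0z; apply: connect_trans v0z _.
by rewrite (fconnect_sym alt_inj) -{2}(alt_invK z) fconnect1.
Qed.

Lemma alt_cycle_partner z : z \in C -> m z \in C.
Proof.
move=> zC; case: (boolP (black z)) => bz.
  by have := alt_cycle_alt zC; rewrite /alt bz.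
by have := alt_cycle_alt_inv zC; rewrite /alt_inv (negbTE bz).
Qed.

Lemma alt_cycle_disagree z : z \in C -> black z -> m z != m' z.
Proof.
move=> zC bz; have zW := alt_cycle_in zC.
rewrite -(alt_period2 zW bz); apply/negP => /eqP twice.
case/orP: (fconnect_period2 twice (alt_cycle_fconnect zC (in_orbit _ v0))) => /eqP v0z.
  by move: mv0; rewrite v0z -(alt_period2 zW bz) twice eqxx.
by move: bv0; rewrite v0z alt_colour // bz.
Qed.

Lemma alt_cycle_edge_notin z : z \in C -> black z -> [set z; m z] \notin M'.
Proof.
move=> zC bz; apply/negP => zM'.
have : m z \in [set z; m' z] by rewrite -(partner_uniq HM' zM' (set21 _ _)) set22.
case/set2P=> [mzz|]; last by apply/eqP; apply: alt_cycle_disagree.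
by move: (partner_colour HM (alt_cycle_in zC)); rewrite mzz; case: (black z).
Qed.

(* v0, alt v0 and alt (alt v0) are three distinct vertices of the cycle. *)
Lemma alt_cycle_size : 2 < size C.
Proof.
have b1 : black (alt v0) = false by rewrite alt_colour // bv0.
have b2 : black (alt (alt v0)) = true by rewrite alt_colour ?alt_in // b1.
have n02 : alt (alt v0) != v0 by rewrite alt_period2.
have U : uniq [:: v0; alt v0; alt (alt v0)].
  rewrite /= !inE negb_or [v0 == alt (alt v0)]eq_sym n02 !andbT.
  apply/andP; split.
    by apply/eqP => v01; move: b1; rewrite -v01 bv0.
  by apply/eqP => v12; move: b2; rewrite -v12 b1.
apply: (uniq_leq_size U) => x; rewrite !inE.
by case/or3P=> /eqP ->; rewrite ?alt_cycle_alt ?in_orbit.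
Qed.

Lemma next_alt_cycle z : z \in C -> next C z = alt z.
Proof. by move=> zC; apply/esym/eqP; apply: (next_cycle (cycle_orbit alt_inj v0)). Qed.

Lemma alt_graph_cycle : graph_cycle E C.
Proof.
rewrite /graph_cycle orbit_uniq alt_cycle_size /=; apply/allP => z zC.
by rewrite next_alt_cycle // alt_edge // alt_cycle_in.
Qed.

(* ...and it is nice: the M-edges off the cycle match the remaining vertices. *)
Lemma alt_cycle_nice : nice_cycle W E C.
Proof.
split; first exact: alt_graph_cycle.
set V := W :\: [set x in C].
exists [set e in M | e \subset V]; apply/andP; split; first (apply/andP; split).
- by apply/subsetP => e; rewrite !inE => /andP[eM ->]; rewrite (matching_edge HM eM).
- by apply/forall_inP => e; rewrite inE => /andP[_ ->].
apply/forall_inP => v vV.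
have vW : v \in W by move: vV; rewrite inE => /andP[].
rewrite -(eqP (matching_card HM vW)); apply/eqP; apply: eq_card => e; rewrite !inE.
case: (boolP (e \in M)) => //= eM; case: (boolP (v \in e)) => ve; rewrite ?andbF //.
rewrite andbT (partner_uniq HM eM ve); apply/subsetP => y /set2P[] -> //.
rewrite !inE (partner_in HM vW) andbT; apply/negP => /alt_cycle_partner.
by rewrite partnerK; move: vV; rewrite !inE => /andP[/negP].
Qed.

(* No edge of the cycle lies in an e-cut D with D ∩ M ⊆ M': the cycle would
   have to leave the black side of D along an M-edge that is not in M'. *)
Lemma alt_cycle_avoids_cut D x :
  ecut W E D -> D :&: M \subset M' -> x \in C -> [set x; alt x] \notin D.
Proof.
case/ecut_oriented=> A [B [AB AUB -> orient]] DM xC; apply/negP.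
rewrite inE => /andP[_ /exists_inP[u uA /exists_inP[w wB /eqP xuw]]].
have onC y : y \in [set x; alt x] -> y \in C.
  by case/set2P=> ->; rewrite ?alt_cycle_alt.
have uC : u \in C by rewrite onC // xuw set21.
have wC : w \in C by rewrite onC // xuw set22.
have wA : w \notin A by apply/negP => wA; have := in_set0 w; rewrite -AB inE wA wB.
have [y uy /andP[yA ayA]] := fconnect_exit (alt_cycle_fconnect uC wC) uA wA.
have yC : y \in C by rewrite -fconnect_orbit (connect_trans _ uy) ?fconnect_orbit.
have yW := alt_cycle_in yC.
have ayB : alt y \in B.
  by move: (alt_in yW); rewrite -AUB inE (negbTE ayA).
have yD : [set y; alt y] \in cut_edges E A B.
  rewrite inE alt_edge //; apply/exists_inP; exists y => //.
  by apply/exists_inP; exists (alt y).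
have yblack : black y by rewrite -(orient _ yD) ?set21.
apply: (negP (alt_cycle_edge_notin yC yblack)); apply: (subsetP DM).
have ayM : alt y = m y by rewrite /alt yblack.
by rewrite inE -ayM yD ayM partner_edge.
Qed.

End AlternatingCycle.
End Alternating.
End Matchings.

Lemma HS_proper_edges N (c : seq (vtx N)) : proper_edges (HS_E c).
Proof.
by apply: lat_edges_proper => e; rewrite inE => /existsP[h /andP[_ /andP[]]].
Qed.

Theorem mainTheorem3 (N : nat) (c : seq (vtx N)) (Ds : seq {set {set vtx N}}) :
  lat_cycle c ->
  (exists M, perfect_matching (HS_V c) (HS_E c) M) ->
  (forall D, D \in Ds -> ecut (HS_V c) (HS_E c) D) ->
  (forall c', nice_cycle (HS_V c) (HS_E c) c' ->
     exists2 D, D \in Ds & exists2 x, x \in c' & [set x; next c' x] \in D) ->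
  complete_forcing (HS_V c) (HS_E c) (\bigcup_(D <- Ds) D).
Proof.
move=> _ _ Dcut Dnice M M' HM HM' DM; apply/eqP; apply: contraT => neqM.
have HE := @HS_proper_edges N c.
have [v0 [v0W bv0 mv0]] := matchings_differ HE HM HM' neqM.
have [D DDs [x xC xD]] := Dnice _ (alt_cycle_nice HE HM HM' v0W bv0 mv0).
have DM' : D :&: M \subset M'.
  by apply: subset_trans DM; apply: setSI; rewrite bigcup_seq; apply: bigcup_sup.
rewrite (next_alt_cycle HE HM HM') // in xD.
by case/negP: (alt_cycle_avoids_cut HE HM HM' v0W bv0 mv0 (Dcut D DDs) DM' xC).
Qed.
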